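(* Let $\sigma$ be a state with $q=ch(\sigma)\ge 1$, let $D\subseteq\mathcal U$ be a question, and let $\sigma_{yes},\sigma_{no}$ be the resulting states. If $|w_{q-1}(\sigma_{yes})-w_{q-1}(\sigma_{no})|\le 1$, then $ch(\sigma_{yes})\le q-1$ and $ch(\sigma_{no})\le q-1$.
   Context: Let $\mathcal U=\{0,\dots,2^m-1\}$. A state is a map $\sigma:\mathcal U\to\{0,1,2,3,4\}$ with type $(t_0,t_1,t_2,t_3)$, $t_i=|\sigma^{-1}(i)|$. For $q\ge0$ the $q$-th volume is $w_q(\sigma)=\sum_{j=0}^3 t_j\sum_{\ell=0}^{3-j}\binom{q}{\ell}$, and the character is $ch(\sigma)=\min\{q\ge 0: w_q(\sigma)\le 2^q\}$. For a question $D\subseteq\mathcal U$, $\sigma_{yes}(y)=\min\{\sigma(y)+[y\notin D],4\}$ and $\sigma_{no}(y)=\min\{\sigma(y)+[y\in D],4\}$. *)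

From mathcomp Require Import all_boot.
From mathcomp Require Import zify.
Set Implicit Arguments. Unset Strict Implicit. Unset Printing Implicit Defensive.

Definition state (m : nat) := {ffun 'I_(2 ^ m) -> 'I_5}.

Definition typ (m : nat) (s : state m) (i : nat) : nat :=
  #|[set y | nat_of_ord (s y) == i]|.

Definition vol (m : nat) (s : state m) (q : nat) : nat :=
  \sum_(j < 4) typ s j * \sum_(l < (3 - j).+1) 'C(q, l).

Lemma vol_le (m : nat) (s : state m) q : vol s q <= 2 ^ (m + 4) * (q.+1 ^ 3).
Proof.
rewrite /vol.
have Hc : forall l : nat, l < 4 -> 'C(q, l) <= q.+1 ^ 3.
  move=> l Hl.
  apply: (@leq_trans (q ^ l)).
    apply: (@leq_trans (q ^_ l)).
      rewrite -bin_ffact; apply: leq_pmulr; exact: fact_gt0.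
    elim: (l) => [|k IH]; first by rewrite ffactn0 expn0.
    rewrite ffactnSr expnSr; apply: leq_mul => //; exact: leq_subr.
  apply: (@leq_trans (q.+1 ^ l)); first by case: (l) => [|l'] //; rewrite leq_exp2r.
  rewrite leq_pexp2l //; lia.
have Hb : forall j : 'I_4, \sum_(l < (3 - j).+1) 'C(q, l) <= 4 * q.+1 ^ 3.
  move=> j; apply: (@leq_trans (\sum_(l < (3 - j).+1) q.+1 ^ 3)).
    apply: leq_sum => l _; apply: Hc; have := ltn_ord l; lia.
  rewrite sum_nat_const card_ord leq_mul2r; apply/orP; right; lia.
have Ht : forall j : nat, typ s j <= 2 ^ m.
  move=> j; rewrite /typ; apply: leq_trans (max_card _) _; by rewrite card_ord.
apply: (@leq_trans (\sum_(j < 4) 2 ^ m * (4 * q.+1 ^ 3))).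
  apply: leq_sum => j _; apply: leq_mul; [exact: Ht | exact: Hb].
rewrite sum_nat_const card_ord expnD; lia.
Qed.

Lemma exp_big k : 4 * k + 31 <= 2 ^ (k + 8).
Proof.
elim: k => [//|k IH]; rewrite addSn expnS; lia.
Qed.

Lemma ch_exists (m : nat) (s : state m) : exists q, vol s q <= 2 ^ q.
Proof.
exists (2 ^ (m + 8)).
apply: leq_trans (vol_le s _) _.
have H1 : (2 ^ (m + 8)).+1 <= 2 ^ (m + 9).
  rewrite (_ : m + 9 = (m + 8).+1) ?expnS; last lia.
  have := expn_gt0 2 (m + 8); set t := 2 ^ (m + 8); lia.
apply: (@leq_trans (2 ^ (m + 4) * (2 ^ (m + 9)) ^ 3)).
  by rewrite leq_mul2l leq_exp2r // H1 orbT.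
rewrite -expnM -expnD leq_exp2l //.
have := exp_big m; lia.
Qed.

Definition ch (m : nat) (s : state m) : nat := ex_minn (ch_exists s).

Definition incr (k : 'I_5) (b : bool) : 'I_5 := inord (minn (k + b) 4).

Definition s_yes (m : nat) (s : state m) (D : {set 'I_(2 ^ m)}) : state m :=
  [ffun y => incr (s y) (y \notin D)].
Definition s_no (m : nat) (s : state m) (D : {set 'I_(2 ^ m)}) : state m :=
  [ffun y => incr (s y) (y \in D)].

From mathcomp Require Import all_boot.
From mathcomp Require Import zify.

(* Berlekamp's conservation law.  The volume is additive over the universe, an
   element in state k contributing sum_(l < 4 - k) C(q, l), and by Pascal's
   rule the contributions of y to w_(q-1)(sigma_yes) and w_(q-1)(sigma_no) add
   up to its contribution to w_q(sigma).  Hence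
   w_(q-1)(sigma_yes) + w_(q-1)(sigma_no) = w_q(sigma) <= 2^q, and two volumes
   differing by at most 1 with sum at most 2^q are both at most 2^(q-1). *)

Definition weight (q k : nat) : nat := \sum_(l < 4 - k) 'C(q, l).

Lemma weight4 q : weight q 4 = 0.
Proof. by rewrite /weight big_ord0. Qed.

Lemma vol_sum_weight m (s : state m) q : vol s q = \sum_y weight q (s y).
Proof.
have weight_by_value (k : 'I_5) :
    weight q k = \sum_(j < 4) (k == j :> nat) * weight q j.
  by case: k => -[|[|[|[|[|//]]]]] hk; rewrite !big_ord_recr big_ord0 /= ?weight4; lia.
under [RHS]eq_bigr do rewrite weight_by_value.
rewrite exchange_big /=; apply: eq_bigr => j _.
rewrite -big_distrl /= /weight -(subSn (ltn_ord j)); congr (_ * _).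
by rewrite /typ -sum1_card big_mkcond; apply: eq_bigr => y _; rewrite inE; case: eqP.
Qed.

Lemma sum_binS p n :
  \sum_(l < n.+1) 'C(p.+1, l) = \sum_(l < n.+1) 'C(p, l) + \sum_(l < n) 'C(p, l).
Proof.
elim: n => [|n IHn]; first by rewrite !big_ord1 big_ord0 !bin0.
rewrite big_ord_recr IHn binS /= [\sum_(l < n.+2) _]big_ord_recr.
by rewrite [\sum_(l < n.+1) 'C(p, l)]big_ord_recr /=; lia.
Qed.

Lemma incr_false (k : 'I_5) : incr k false = k.
Proof. by apply: val_inj; rewrite /incr /= addn0 inordK; have := ltn_ord k; lia. Qed.

Lemma incr_true (k : 'I_5) : incr k true = minn k.+1 4 :> nat.
Proof. by rewrite /incr /= addn1 inordK //; lia. Qed.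

Lemma weight_incr_pascal p (k : 'I_5) (b : bool) :
  weight p (incr k b) + weight p (incr k (~~ b)) = weight p.+1 k.
Proof.
wlog -> : b / b = false.
  by case: b => /(_ false erefl) //=; rewrite addnC.
rewrite incr_false incr_true.
case: k => [k hk] /=; have [-> | k_neq4] := eqVneq k 4.
  by rewrite (minn_idPr _) ?weight4.
have k_lt4 : k < 4 by lia.
by rewrite (minn_idPl k_lt4) /weight -(subnSK k_lt4) sum_binS subnS.
Qed.

Lemma vol_yes_add_no m (s : state m) D p :
  vol (s_yes s D) p + vol (s_no s D) p = vol s p.+1.
Proof.
rewrite !vol_sum_weight -big_split /=; apply: eq_bigr => y _.
by rewrite !ffunE -(weight_incr_pascal p (s y) (y \notin D)) negbK.
Qed.

Lemma vol_ch m (s : state m) : vol s (ch s) <= 2 ^ ch s.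
Proof. by rewrite /ch; case: ex_minnP. Qed.

Lemma ch_le m (s : state m) q : vol s q <= 2 ^ q -> ch s <= q.
Proof. by rewrite /ch; case: ex_minnP => r _; apply. Qed.

Theorem lemma1 (m : nat) (s : state m) (D : {set 'I_(2 ^ m)}) :
  1 <= ch s ->
  vol (s_yes s D) (ch s).-1 <= vol (s_no s D) (ch s).-1 + 1 ->
  vol (s_no s D) (ch s).-1 <= vol (s_yes s D) (ch s).-1 + 1 ->
  ch (s_yes s D) <= (ch s).-1 /\ ch (s_no s D) <= (ch s).-1.
Proof.
move=> ch_pos yes_le no_le.
have sum_le : vol (s_yes s D) (ch s).-1 + vol (s_no s D) (ch s).-1 <= 2 * 2 ^ (ch s).-1.
  by rewrite vol_yes_add_no -expnS prednK // vol_ch.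
by split; apply: ch_le; lia.
Qed.
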